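(* For all effect algebras $A,B$, the tensor product $A\otimes B$ is the colimit of $D_{A,B}$: $A\otimes B\cong\varinjlim D_{A,B}$.
   Context: Effect algebras are partial algebras $(A;+,0,1)$ satisfying the Foulis–Bennett axioms; one-element effect algebras are allowed. Morphisms preserve $1$ and defined sums; $\mathbf{EA}$ is the category. Boolean algebras are effect algebras via: $x+y$ is defined iff $x\wedge y=0$, and then $x+y=x\vee y$. For $[n]=\{1,\dots,n\}$, $\mathbf{FinBool}$ is the full subcategory of Boolean algebras on the objects $2^{[n]}$, $n\in\mathbb N$. The category $\int R(A)$ has: - objects: pairs $(2^{[n]},g)$ with $g\colon 2^{[n]}\to A$ an effect-algebra morphism; - arrows $(2^{[n]},g)\to(2^{[n']},g')$: Boolean algebra morphisms $f\colon 2^{[n]}\to 2^{[n']}$ with $g'\circ f=g$. $*$ is the coproduct of Boolean algebras. $D_{A,B}\colon\int R(A)\times\int R(B)\to\mathbf{EA}$ sends $\bigl((2^{[n]},g_A),(2^{[m]},g_B)\bigr)$ to $2^{[n]}*2^{[m]}$, and sends $(f_A,f_B)$ to $f_A*f_B$. A bimorphism from $A,B$ to $C$ is a map $h\colon A\times B\to C$ with $h(1,1)=1$ that is additive (preserving orthogonality and sums) in each argument separately. The tensor product $A\otimes B$ is the initial object of the category $\beta_{A,B}$, whose objects are bimorphisms from $A,B$ and whose morphisms $h\to h'$ are $\mathbf{EA}$-morphisms $f$ with $f\circ h=h'$. *)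

From mathcomp Require Import all_boot.
Set Implicit Arguments. Unset Strict Implicit. Unset Printing Implicit Defensive.

Record EA := MkEA {
  ea_car :> Type;
  ea_sum : ea_car -> ea_car -> option ea_car;
  ea_zero : ea_car;
  ea_one : ea_car;
  ea_comm : forall a b, ea_sum a b = ea_sum b a;
  ea_assoc : forall a b c ab abc,
      ea_sum a b = Some ab -> ea_sum ab c = Some abc ->
      exists bc, ea_sum b c = Some bc /\ ea_sum a bc = Some abc;
  ea_orth : forall a, exists! b, ea_sum a b = Some ea_one;
  ea_zo : forall a x, ea_sum a ea_one = Some x -> a = ea_zero }.
Arguments ea_sum : clear implicits.
Arguments ea_one : clear implicits.
Arguments ea_zero : clear implicits.

Definition ea_morph (A B : EA) (f : A -> B) : Prop :=
  f (ea_one A) = ea_one B /\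
  forall a b c, ea_sum A a b = Some c -> ea_sum B (f a) (f b) = Some (f c).

Definition ea_iso (A B : EA) : Prop :=
  exists (f : A -> B) (g : B -> A),
    ea_morph f /\ ea_morph g /\ (forall a, g (f a) = a) /\ (forall b, f (g b) = b).

Definition bool_sum (T : finType) (X Y : {set T}) : option {set T} :=
  if X :&: Y == set0 then Some (X :|: Y) else None.

Lemma setI0P (T : finType) (X Y : {set T}) :
  reflect (forall x, x \in X -> x \in Y -> False) (X :&: Y == set0).
Proof.
apply: (iffP eqP) => [e x xX xY | h].
  by have := in_set0 x; rewrite -e in_setI xX xY.
apply/setP => x; rewrite in_set0 in_setI.
by case xX: (x \in X); case xY: (x \in Y) => //; case: (h x).
Qed.

Lemma bool_sum_comm (T : finType) (X Y : {set T}) : bool_sum X Y = bool_sum Y X.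
Proof. by rewrite /bool_sum setIC setUC. Qed.

Lemma bool_sum_assoc (T : finType) (a b c ab abc : {set T}) :
  bool_sum a b = Some ab -> bool_sum ab c = Some abc ->
  exists bc, bool_sum b c = Some bc /\ bool_sum a bc = Some abc.
Proof.
rewrite /bool_sum; case: ifP => // /setI0P dab [<-]; case: ifP => // /setI0P dabc [<-].
have dbc : b :&: c == set0.
  by apply/setI0P => x xb xc; apply: (dabc x); rewrite ?in_setU ?xb ?orbT.
have dabc' : a :&: (b :|: c) == set0.
  apply/setI0P => x xa; rewrite in_setU => /orP[xb|xc].
    exact: (dab x).
  by apply: (dabc x); rewrite ?in_setU ?xa.
exists (b :|: c); rewrite dbc dabc'; split => //.
by rewrite setUA.
Qed.

Lemma bool_sum_orth (T : finType) (a : {set T}) :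
  exists! b, bool_sum a b = Some setT.
Proof.
exists (~: a); split.
  by rewrite /bool_sum setICr eqxx setUCr.
move=> b; rewrite /bool_sum; case: ifP => // /setI0P dab [e].
apply/setP => x; rewrite in_setC.
case xa: (x \in a).
  by case xb: (x \in b) => //; case: (dab x xa xb).
by have := in_setT x; rewrite -e in_setU xa.
Qed.

Lemma bool_sum_zo (T : finType) (a x : {set T}) :
  bool_sum a setT = Some x -> a = set0.
Proof.
rewrite /bool_sum; case: ifP => // /setI0P d _.
by apply/setP => y; rewrite in_set0; case ya: (y \in a) => //; case: (d y ya (in_setT y)).
Qed.

Definition bool_ea (T : finType) : EA :=
  @MkEA {set T} (@bool_sum T) set0 setT (@bool_sum_comm T) (@bool_sum_assoc T)
        (@bool_sum_orth T) (@bool_sum_zo T).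

Definition ba_morph (T U : finType) (f : {set T} -> {set U}) : Prop :=
  [/\ f set0 = set0, f setT = setT,
      (forall X Y, f (X :|: Y) = f X :|: f Y),
      (forall X Y, f (X :&: Y) = f X :&: f Y) &
      (forall X, f (~: X) = ~: f X)].

Record RObj (A : EA) := MkRObj {
  r_n : nat;
  r_g : {set 'I_r_n} -> A;
  r_g_morph : @ea_morph (bool_ea 'I_r_n) A r_g }.
Arguments r_g {A} r : rename.

Definition RArrow {A : EA} (o o' : RObj A)
    (f : {set 'I_(r_n o)} -> {set 'I_(r_n o')}) : Prop :=
  ba_morph f /\ forall X, r_g o' (f X) = r_g o X.
Arguments RArrow {A} o o' f.

(* 2^[n] * 2^[m] is realised as 2^([n] x [m]) with coproduct injections
   X |-> X x [m] and Y |-> [n] x Y. *)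
Definition coprod_obj (n m : nat) : EA := bool_ea ('I_n * 'I_m)%type.

Definition coprod_map (n n' m m' : nat)
    (fA : {set 'I_n} -> {set 'I_n'}) (fB : {set 'I_m} -> {set 'I_m'})
    (Z : {set 'I_n * 'I_m}) : {set 'I_n' * 'I_m'} :=
  \bigcup_(p in Z) setX (fA [set p.1]) (fB [set p.2]).

Definition D_obj (A B : EA) (oA : RObj A) (oB : RObj B) : EA :=
  coprod_obj (r_n oA) (r_n oB).

Definition legs (A B C : EA) :=
  forall (oA : RObj A) (oB : RObj B), D_obj oA oB -> C.

Definition is_cocone (A B C : EA) (c : legs A B C) : Prop :=
  (forall oA oB, ea_morph (c oA oB)) /\
  (forall (oA oA' : RObj A) (oB oB' : RObj B) fA fB,
      RArrow oA oA' fA -> RArrow oB oB' fB ->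
      forall Z, c oA' oB' (coprod_map fA fB Z) = c oA oB Z).

Definition is_colimit (A B C : EA) (c : legs A B C) : Prop :=
  is_cocone c /\
  forall (X : EA) (x : legs A B X), is_cocone x ->
    exists u : C -> X,
      (ea_morph u /\ forall oA oB Z, u (c oA oB Z) = x oA oB Z) /\
      (forall v : C -> X, ea_morph v -> (forall oA oB Z, v (c oA oB Z) = x oA oB Z) ->
         forall y, v y = u y).

Definition bimorph (A B C : EA) (h : A -> B -> C) : Prop :=
  h (ea_one A) (ea_one B) = ea_one C /\
  (forall b a1 a2 a, ea_sum A a1 a2 = Some a -> ea_sum C (h a1 b) (h a2 b) = Some (h a b)) /\
  (forall a b1 b2 b, ea_sum B b1 b2 = Some b -> ea_sum C (h a b1) (h a b2) = Some (h a b)).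

Definition is_tensor (A B T : EA) (t : A -> B -> T) : Prop :=
  bimorph t /\
  forall (X : EA) (h : A -> B -> X), bimorph h ->
    exists f : T -> X,
      (ea_morph f /\ forall a b, f (t a b) = h a b) /\
      (forall g : T -> X, ea_morph g -> (forall a b, g (t a b) = h a b) ->
         forall y, g y = f y).

(* A cocone [y] under [D_{A,B}] is determined by a bimorphism: on the objects [2^[2]] splitting
   the unit as [a + a'] the value [h a b] of [y] at the atom [(0,0)] is bimorphic, and since every
   object of [\int R(A)] refines such a two-block splitting, naturality forces each leg of [y] to
   send an atom [(i,j)] to [h (g_A {i}) (g_B {j})]. Conversely these values, summed over a set of
   atoms, define a cocone for every bimorphism [h]. So cocones under [D_{A,B}] are the same as
   bimorphisms out of [A, B], and the colimit is the universal bimorphism, i.e. the tensor product,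
   which exists by a generators-and-relations construction. *)

From mathcomp Require Import all_boot.
From Stdlib Require Import ClassicalEpsilon FunctionalExtensionality.
From Stdlib Require Import PropExtensionality ProofIrrelevance.
Set Implicit Arguments. Unset Strict Implicit. Unset Printing Implicit Defensive.

Lemma option_ext (T : Type) (x y : option T) :
  (forall z, x = Some z <-> y = Some z) -> x = y.
Proof.
case: x => [x|]; case: y => [y|] // h.
- by case: (h x) => /(_ erefl) [->].
- by case: (h x) => /(_ erefl).
- by case: (h y) => _ /(_ erefl).
Qed.

Section EffectAlgebraTheory.
Variable X : EA.
Local Notation sum := (ea_sum X).
Local Notation zero := (ea_zero X).
Local Notation one := (ea_one X).

Definition ortho (a : X) : X :=
  proj1_sig (constructive_indefinite_description _ (ea_orth a)).

Lemma ortho_sum a : sum a (ortho a) = Some one.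
Proof. by rewrite /ortho; case: constructive_indefinite_description => b []. Qed.

Lemma ortho_unique a b : sum a b = Some one -> b = ortho a.
Proof.
rewrite /ortho; case: constructive_indefinite_description => c /= [_ uc] hb.
by rewrite (uc b hb).
Qed.

Lemma ea_sum10 : sum one zero = Some one.
Proof.
suff <- : ortho one = zero by exact: ortho_sum.
by apply: (@ea_zo X _ one); rewrite ea_comm ortho_sum.
Qed.

(* Associativity turns [(a' + a) + 0 = 1] into [a' + (a + 0) = 1], so [a + 0] and [a] are both
   the orthosupplement of [a']. *)
Lemma ea_sumr0 a : sum a zero = Some a.
Proof.
have oa : sum (ortho a) a = Some one by rewrite ea_comm ortho_sum.
have [b [ab0 oab]] := ea_assoc oa ea_sum10.
by rewrite ab0 (ortho_unique oab) -(ortho_unique oa).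
Qed.

Lemma ea_sum0l a c : sum zero a = Some c -> c = a.
Proof. by rewrite ea_comm ea_sumr0 => -[]. Qed.

Lemma ea_assoc_l a b c bc abc : sum b c = Some bc -> sum a bc = Some abc ->
  exists ab, sum a b = Some ab /\ sum ab c = Some abc.
Proof.
rewrite ea_comm => cb; rewrite ea_comm => bca.
have [ba [ab h]] := ea_assoc cb bca.
by exists ba; rewrite ea_comm ab ea_comm h.
Qed.

Lemma ea_sum_eq0 x y : sum x y = Some y -> x = zero.
Proof.
move=> xy; have [b [yb xb]] := ea_assoc xy (ortho_sum y).
by move: yb xb; rewrite ortho_sum => -[<-]; apply: ea_zo.
Qed.

Definition seqsum (s : seq X) : option X :=
  foldr (fun x acc => obind (sum x) acc) (Some zero) s.

Lemma seqsum_cat s t z : seqsum (s ++ t) = Some z <->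
  exists x y, seqsum s = Some x /\ seqsum t = Some y /\ sum x y = Some z.
Proof.
elim: s z => [|a s IH] z /=.
  split => [st|[x [y [[<-] [ht xy]]]]]; last by rewrite ht (ea_sum0l xy).
  by exists zero, z; rewrite ea_comm ea_sumr0.
split.
  case e: (seqsum (s ++ t)) => [w|] //= aw.
  have [x [y [sx [ty xy]]]] := (IH w).1 e.
  have [ax [ax' axy]] := ea_assoc_l xy aw.
  by exists ax, y; rewrite sx /= ax'.
move=> [x' [y [sx' [ty x'y]]]].
case e: (seqsum s) sx' => [x|] //= ax.
have [w [xy aw]] := ea_assoc ax x'y.
suff -> : seqsum (s ++ t) = Some w by [].
by apply/IH; exists x, y.
Qed.

Lemma seqsum_catC s t : seqsum (s ++ t) = seqsum (t ++ s).
Proof.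
apply: option_ext => z; rewrite !seqsum_cat.
by split => -[x [y [? [? xy]]]]; exists y, x; rewrite ea_comm.
Qed.

Lemma seqsum_perm (K : eqType) (w : K -> X) (s t : seq K) :
  perm_eq s t -> seqsum (map w s) = seqsum (map w t).
Proof.
elim: s t => [|x s IH] t; first by rewrite perm_sym => /perm_nilP ->.
move=> pst; have xt : x \in t by rewrite -(perm_mem pst) mem_head.
case/splitPr: xt pst => t1 t2 pst.
have p2 : perm_eq s (t1 ++ t2).
  by rewrite -(perm_cons x) (perm_trans pst) // -[x :: t2]cat1s perm_catCA.
by rewrite map_cat seqsum_catC /= (IH _ p2) map_cat seqsum_catC.
Qed.

Section WeightedSums.
Variables (K : finType) (w : K -> X).

Definition wsum (Z : {set K}) : option X := seqsum [seq w i | i <- enum Z].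

Lemma wsumU Z1 Z2 z : Z1 :&: Z2 == set0 ->
  wsum (Z1 :|: Z2) = Some z <->
  exists x y, wsum Z1 = Some x /\ wsum Z2 = Some y /\ sum x y = Some z.
Proof.
move=> /setI0P d; rewrite /wsum -seqsum_cat -map_cat.
suff /undup_id <- : uniq (enum Z1 ++ enum Z2) by rewrite (seqsum_perm w (enum_setU Z1 Z2)).
rewrite cat_uniq !enum_uniq /= andbT; apply/hasPn => x.
by rewrite !mem_enum => x2; apply/negP => x1; apply: (d x).
Qed.

Lemma wsum0 : wsum set0 = Some zero.
Proof. by rewrite /wsum enum_set0. Qed.

Lemma wsum1 k : wsum [set k] = Some (w k).
Proof. by rewrite /wsum enum_set1 /= ea_sumr0. Qed.

Lemma wsum_defined Z t : wsum setT = Some t -> exists x, wsum Z = Some x.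
Proof.
rewrite -(setUCr Z) => /wsumU.
by case/(_ (introT eqP (setICr Z))) => x [y [wx _]]; exists x.
Qed.

(* Only meaningful when [wsum setT] is defined; the default [zero] is then never used. *)
Definition wmorph (Z : {set K}) : X := odflt zero (wsum Z).

Lemma wmorphE Z t : wsum setT = Some t -> wsum Z = Some (wmorph Z).
Proof. by move=> /(wsum_defined Z) [x wx]; rewrite /wmorph wx. Qed.

Lemma wmorph1 k : wmorph [set k] = w k.
Proof. by rewrite /wmorph wsum1. Qed.

End WeightedSums.
End EffectAlgebraTheory.

Lemma bool_sumE (T : finType) (X Y Z : {set T}) :
  bool_sum X Y = Some Z -> X :&: Y == set0 /\ Z = X :|: Y.
Proof. by rewrite /bool_sum; case: ifP => // h [<-]. Qed.

Lemma bool_sumI (T : finType) (X Y : {set T}) :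
  X :&: Y == set0 -> bool_sum X Y = Some (X :|: Y).
Proof. by rewrite /bool_sum => ->. Qed.

Lemma bool_ortho (T : finType) (Z : {set T}) : @ortho (bool_ea T) Z = ~: Z.
Proof. by apply/esym/ortho_unique; rewrite /= /bool_sum setICr eqxx setUCr. Qed.

Lemma wmorph_morph (X : EA) (K : finType) (w : K -> X) :
  wsum w setT = Some (ea_one X) -> @ea_morph (bool_ea K) X (wmorph w).
Proof.
move=> w1; split; first by rewrite /wmorph /= w1.
move=> Z1 Z2 Z /bool_sumE [d ->] /=.
case/(wsumU w _ d): (wmorphE (Z1 :|: Z2) w1) => x [y [wx [wy xy]]].
by move: (wmorphE Z1 w1) (wmorphE Z2 w1); rewrite wx wy => -[<-] [<-].
Qed.

Section Morphisms.
Variables (X Y : EA) (g : X -> Y).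
Hypothesis gm : ea_morph g.

Lemma ea_morph0 : g (ea_zero X) = ea_zero Y.
Proof.
have := gm.2 _ _ _ (ea_sum10 X); rewrite ea_comm gm.1.
exact: ea_zo.
Qed.

Lemma ea_morph_ortho a : g (ortho a) = ortho (g a).
Proof. by apply: ortho_unique; rewrite -gm.1; apply/gm.2/ortho_sum. Qed.

Lemma ea_morph_comp (Z : EA) (f : Y -> Z) : ea_morph f -> ea_morph (fun x => f (g x)).
Proof.
move=> [f1 f2]; split; first by rewrite gm.1 f1.
by move=> a b c /gm.2 /f2.
Qed.

End Morphisms.

Lemma disjoint_set_ind (K : finType) (P : {set K} -> Prop) :
  P set0 -> (forall k, P [set k]) ->
  (forall Z1 Z2, Z1 :&: Z2 == set0 -> P Z1 -> P Z2 -> P (Z1 :|: Z2)) ->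
  forall Z, P Z.
Proof.
move=> P0 P1 PU Z; rewrite -[Z]set_enum.
elim: (enum Z) => [|x s IH].
  by have -> : [set x in [::]] = set0 :> {set K} by apply/setP => y; rewrite !inE.
case xs: (x \in s).
  suff -> : [set y in x :: s] = [set y in s] by [].
  by apply/setP => y; rewrite !inE; case: eqP => // ->.
have -> : [set y in x :: s] = [set x] :|: [set y in s] by apply/setP => y; rewrite !inE.
by apply: PU => //; apply/setI0P => y; rewrite !inE => /eqP ->; rewrite xs.
Qed.

Definition ea_additive (X : EA) (K : finType) (f : {set K} -> X) :=
  f set0 = ea_zero X /\ forall Z1 Z2, Z1 :&: Z2 == set0 ->
    ea_sum X (f Z1) (f Z2) = Some (f (Z1 :|: Z2)).

Lemma ea_morph_additive (X : EA) (K : finType) (f : {set K} -> X) :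
  @ea_morph (bool_ea K) X f -> ea_additive f.
Proof.
by move=> fm; split => [|Z1 Z2 d]; [exact: ea_morph0 fm | apply/fm.2/bool_sumI].
Qed.

Lemma eq_additive (X : EA) (K : finType) (f1 f2 : {set K} -> X) :
  ea_additive f1 -> ea_additive f2 -> (forall k, f1 [set k] = f2 [set k]) ->
  forall Z, f1 Z = f2 Z.
Proof.
move=> [f10 f1U] [f20 f2U] f12; apply: disjoint_set_ind => [|//|Z1 Z2 d e1 e2].
  by rewrite f10 f20.
by have := f1U _ _ d; rewrite e1 e2 f2U // => -[].
Qed.

Lemma ea_morph_union (X : EA) (K : finType) (f : {set K} -> X) Z1 Z2 x :
  @ea_morph (bool_ea K) X f -> Z1 :&: Z2 == set0 ->
  ea_sum X (f Z1) (f Z2) = Some x -> f (Z1 :|: Z2) = x.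
Proof. by move=> fm d; rewrite (fm.2 _ _ _ (bool_sumI d)) => -[]. Qed.

(* The tensor product is presented by generators [a (x) b] and the relations of a bimorphism:
   [teq t u] says that the terms [t] and [u] are both defined and denote the same element, and
   [teq] is the least partial equivalence relation closed under the effect algebra axioms. *)
Section TensorConstruction.
Variables A B : EA.

Inductive tterm : Type :=
  | Tgen of A & B
  | Tzero
  | Tone
  | Tortho of tterm
  | Tsum of tterm & tterm.

Inductive teq : tterm -> tterm -> Prop :=
  | teq_gen a b : teq (Tgen a b) (Tgen a b)
  | teq_zero : teq Tzero Tzero
  | teq_one : teq Tone Tone
  | teq_sym t u : teq t u -> teq u t
  | teq_trans t u v : teq t u -> teq u v -> teq t v
  | teq_ortho t u : teq t u -> teq (Tortho t) (Tortho u)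
  | teq_ortho_def t u : teq (Tortho t) u -> teq t t
  | teq_sum t t' u u' v : teq t t' -> teq u u' -> teq (Tsum t u) v -> teq (Tsum t' u') v
  | teq_sum_defl t u v : teq (Tsum t u) v -> teq t t
  | teq_sum_defr t u v : teq (Tsum t u) v -> teq u u
  | teq_ortho_sum t : teq t t -> teq (Tsum t (Tortho t)) Tone
  | teq_ortho_unique t u : teq (Tsum t u) Tone -> teq u (Tortho t)
  | teq_zo t x : teq (Tsum t Tone) x -> teq t Tzero
  | teq_comm t u v : teq (Tsum t u) v -> teq (Tsum u t) v
  | teq_assoc_def t u v w x : teq (Tsum t u) v -> teq (Tsum v w) x -> teq (Tsum u w) (Tsum u w)
  | teq_assoc t u v w x : teq (Tsum t u) v -> teq (Tsum v w) x -> teq (Tsum t (Tsum u w)) x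
  | teq_gen_one : teq (Tgen (ea_one A) (ea_one B)) Tone
  | teq_addl b a1 a2 a : ea_sum A a1 a2 = Some a -> teq (Tsum (Tgen a1 b) (Tgen a2 b)) (Tgen a b)
  | teq_addr a b1 b2 b : ea_sum B b1 b2 = Some b -> teq (Tsum (Tgen a b1) (Tgen a b2)) (Tgen a b).

Lemma teq_refl_r t u : teq t u -> teq u u.
Proof. by move=> tu; apply: teq_trans (teq_sym tu) tu. Qed.

Lemma teq_refl_l t u : teq t u -> teq t t.
Proof. by move=> tu; apply: teq_trans tu (teq_sym tu). Qed.

(* Undefined terms are sent to the class of [Tzero], so that [tclass] is total. *)
Definition tclass_pred (t : tterm) : tterm -> Prop :=
  if excluded_middle_informative (teq t t) then teq t else teq Tzero.

Lemma tclass_predE t : teq t t -> tclass_pred t = teq t.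
Proof. by rewrite /tclass_pred; case: excluded_middle_informative. Qed.

Lemma tclass_pred_class t : exists u, teq u u /\ tclass_pred t = teq u.
Proof.
rewrite /tclass_pred; case: excluded_middle_informative => tt; first by exists t.
by exists Tzero; split => //; apply: teq_zero.
Qed.

Definition tcar := {P : tterm -> Prop | exists u, teq u u /\ P = teq u}.

Definition tclass (t : tterm) : tcar := exist _ (tclass_pred t) (tclass_pred_class t).

Lemma tclass_eq t u : teq t t -> teq u u -> (tclass t = tclass u <-> teq t u).
Proof.
move=> tt uu; split.
  by move/(congr1 (@proj1_sig _ _)) => /=; rewrite !tclass_predE // => ->.
move=> tu; apply: eq_sig_hprop => [? ? ?|/=]; first exact: proof_irrelevance.
rewrite !tclass_predE //; apply: functional_extensionality => v.
apply: propositional_extensionality.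
by split => [tv|uv]; [exact: teq_trans (teq_sym tu) tv | exact: teq_trans tu uv].
Qed.

Lemma tclassP (P : tcar) : exists t, teq t t /\ P = tclass t.
Proof.
case: P => P [u [uu eP]]; exists u; split => //.
apply: eq_sig_hprop => [? ? ?|/=]; first exact: proof_irrelevance.
by rewrite tclass_predE.
Qed.

Definition tsum_rel (P Q R : tcar) : Prop :=
  exists t u v, [/\ P = tclass t, Q = tclass u, R = tclass v & teq (Tsum t u) v].

Lemma tsum_rel_fun P Q R1 R2 : tsum_rel P Q R1 -> tsum_rel P Q R2 -> R1 = R2.
Proof.
move=> [t1 [u1 [v1 [-> -> -> e1]]]] [t2 [u2 [v2 [et eu -> e2]]]].
have tt : teq t1 t2 by apply/tclass_eq => //; [exact: teq_sum_defl e1 | exact: teq_sum_defl e2].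
have uu : teq u1 u2 by apply/tclass_eq => //; [exact: teq_sum_defr e1 | exact: teq_sum_defr e2].
apply/tclass_eq; [exact: teq_refl_r e1 | exact: teq_refl_r e2 |].
exact: teq_trans (teq_sym (teq_sum tt uu e1)) e2.
Qed.

Definition tsum (P Q : tcar) : option tcar :=
  match excluded_middle_informative (exists R, tsum_rel P Q R) with
  | left h => Some (proj1_sig (constructive_indefinite_description _ h))
  | right _ => None
  end.

Lemma tsumE P Q R : tsum P Q = Some R <-> tsum_rel P Q R.
Proof.
rewrite /tsum; case: excluded_middle_informative => h.
  case: constructive_indefinite_description => R' PQR' /=.
  by split => [[<-] //|PQR]; rewrite (tsum_rel_fun PQR' PQR).
by split => // PQR; case: h; exists R.
Qed.

Lemma tsum_class t u : teq (Tsum t u) (Tsum t u) ->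
  tsum (tclass t) (tclass u) = Some (tclass (Tsum t u)).
Proof. by move=> tu; apply/tsumE; exists t, u, (Tsum t u). Qed.

Lemma tsum_comm P Q : tsum P Q = tsum Q P.
Proof.
apply: option_ext => R; rewrite !tsumE.
by split => -[t [u [v [-> -> -> tuv]]]]; exists u, t, v; split => //; apply: teq_comm.
Qed.

Lemma tsum_assoc P Q R PQ PQR : tsum P Q = Some PQ -> tsum PQ R = Some PQR ->
  exists QR, tsum Q R = Some QR /\ tsum P QR = Some PQR.
Proof.
move=> /tsumE [t [u [v [-> -> -> tuv]]]] /tsumE [v' [w [x [e -> -> v'wx]]]].
have vv : teq v v' by apply/tclass_eq => //; [exact: teq_refl_r tuv | exact: teq_sum_defl v'wx].
have vwx : teq (Tsum v w) x by apply: teq_sum (teq_sym vv) (teq_sum_defr v'wx) v'wx.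
exists (tclass (Tsum u w)); split; apply/tsumE.
  by exists u, w, (Tsum u w); split => //; apply: teq_assoc_def tuv vwx.
by exists t, (Tsum u w), x; split => //; apply: teq_assoc tuv vwx.
Qed.

Lemma tsum_ortho P : exists! Q, tsum P Q = Some (tclass Tone).
Proof.
have [t [tt ->]] := tclassP P.
exists (tclass (Tortho t)); split.
  by apply/tsumE; exists t, (Tortho t), Tone; split => //; apply: teq_ortho_sum.
move=> Q /tsumE [t' [u [v [e -> e1 tuv]]]].
have tt' : teq t t' by apply/tclass_eq => //; exact: teq_sum_defl tuv.
have v1 : teq v Tone by apply/tclass_eq => //; [exact: teq_refl_r tuv | exact: teq_one].
have ut' := teq_ortho_unique (teq_trans tuv v1).
apply/tclass_eq; [exact: teq_ortho tt | exact: teq_refl_l ut' |].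
exact: teq_sym (teq_trans ut' (teq_sym (teq_ortho tt'))).
Qed.

Lemma tsum_zo P R : tsum P (tclass Tone) = Some R -> P = tclass Tzero.
Proof.
move=> /tsumE [t [u [v [-> e _ tuv]]]].
have u1 : teq u Tone by apply/tclass_eq => //; [exact: teq_sum_defr tuv | exact: teq_one].
apply/tclass_eq; [exact: teq_sum_defl tuv | exact: teq_zero |].
exact: teq_zo (teq_sum (teq_sum_defl tuv) u1 tuv).
Qed.

Definition Tensor : EA :=
  @MkEA tcar tsum (tclass Tzero) (tclass Tone) tsum_comm tsum_assoc tsum_ortho tsum_zo.

Definition tens (a : A) (b : B) : Tensor := tclass (Tgen a b).

Lemma tens_bimorph : bimorph tens.
Proof.
split; first by apply/tclass_eq; [exact: teq_gen | exact: teq_one | exact: teq_gen_one].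
split=> [b a1 a2 a|a b1 b2 b] e; apply/tsumE; eexists _, _, _; split; try reflexivity.
  exact: teq_addl.
exact: teq_addr.
Qed.

End TensorConstruction.
Arguments Tzero {A B}.
Arguments Tone {A B}.

Section TensorUniversal.
Variables (A B X : EA) (h : A -> B -> X).
Hypothesis hb : bimorph h.

Fixpoint tinterp (t : tterm A B) : option X :=
  match t with
  | Tgen a b => Some (h a b)
  | Tzero => Some (ea_zero X)
  | Tone => Some (ea_one X)
  | Tortho t => omap (@ortho X) (tinterp t)
  | Tsum t u => if (tinterp t, tinterp u) is (Some x, Some y) then ea_sum X x y else None
  end.

Lemma tinterp_teq t u : teq t u -> exists x, tinterp t = Some x /\ tinterp u = Some x.
Proof.
elim=> {t u} /=.
- by move=> a b; exists (h a b).
- by exists (ea_zero X).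
- by exists (ea_one X).
- by move=> t u _ [x [-> ->]]; exists x.
- by move=> t u v _ [x [-> ->]] _ [y [[->] ->]]; exists y.
- by move=> t u _ [x [-> ->]]; exists (ortho x).
- by move=> t u _ [x []]; case: (tinterp t) => // y _; exists y.
- by move=> t t' u u' v _ [x [<- ->]] _ [y [<- ->]] _ [z [tu ->]]; exists z.
- by move=> t u v _ [z []]; case: (tinterp t) => // x; case: (tinterp u) => // y; exists x.
- by move=> t u v _ [z []]; case: (tinterp t) => // x; case: (tinterp u) => // y; exists y.
- by move=> t _ [x [-> _]]; exists (ea_one X); rewrite /= ortho_sum.
- move=> t u _ [z [+ [e]]]; rewrite -e.
  by case: (tinterp t) => // x; case: (tinterp u) => // y /ortho_unique ->; exists (ortho x).
- move=> t x _ [z []]; case: (tinterp t) => // y /ea_zo ->.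
  by exists (ea_zero X).
- move=> t u v _ [z [+ ->]].
  by case: (tinterp t) => // x; case: (tinterp u) => // y xy; exists z; rewrite ea_comm.
- move=> t u v w x _ [z1 [+ ->]] _ [z2 [+ _]] /=.
  case: (tinterp t) => // a; case: (tinterp u) => // b; case: (tinterp w) => // c ab abc.
  by have [bc [-> _]] := ea_assoc ab abc; exists bc.
- move=> t u v w x _ [z1 [+ ->]] _ [z2 [+ ->]] /=.
  case: (tinterp t) => // a; case: (tinterp u) => // b; case: (tinterp w) => // c ab abc.
  by have [bc [-> ->]] := ea_assoc ab abc; exists z2.
- by exists (ea_one X); rewrite hb.1.
- by move=> b a1 a2 a e; exists (h a b); rewrite (hb.2.1 _ _ _ _ e).
- by move=> a b1 b2 b e; exists (h a b); rewrite (hb.2.2 _ _ _ _ e).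
Qed.

Definition trep (P : Tensor A B) : tterm A B :=
  proj1_sig (constructive_indefinite_description _ (tclassP P)).

Lemma trepP P : teq (trep P) (trep P) /\ P = tclass (trep P).
Proof. by rewrite /trep; case: constructive_indefinite_description. Qed.

Definition tlift (P : Tensor A B) : X := odflt (ea_zero X) (tinterp (trep P)).

Lemma tlift_class t : teq t t -> tinterp t = Some (tlift (tclass t)).
Proof.
move=> tt; have [rr rE] := trepP (tclass t); rewrite /tlift.
by have /tinterp_teq [x [-> ->]] : teq t (trep (tclass t)) by apply/tclass_eq.
Qed.

Lemma tlift_morph : ea_morph tlift.
Proof.
split; first by have /= [] := tlift_class (@teq_one A B).
move=> P Q R /tsumE [t [u [v [-> -> -> tuv]]]].
have [x [/=]] := tinterp_teq tuv.
rewrite (tlift_class (teq_sum_defl tuv)) (tlift_class (teq_sum_defr tuv)) => ->.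
by rewrite (tlift_class (teq_refl_r tuv)).
Qed.

Lemma tlift_tens a b : tlift (tens a b) = h a b.
Proof. by have /= [] := tlift_class (teq_gen a b). Qed.

Lemma tlift_unique (g : Tensor A B -> X) : ea_morph g ->
  (forall a b, g (tens a b) = h a b) -> forall y, g y = tlift y.
Proof.
move=> gm gh.
have gE t : teq t t -> tinterp t = Some (g (tclass t)).
  elim: t => /= [a b|||t IH tt|t IHt u IHu tu].
  - by rewrite -gh.
  - by rewrite -(ea_morph0 gm).
  - by rewrite gm.1.
  - have tt' := teq_ortho_def tt; rewrite IH //= -(ea_morph_ortho gm); congr (Some (g _)).
    by apply/esym/ortho_unique/tsumE; exists t, (Tortho t), Tone; split => //; apply: teq_ortho_sum.
  - rewrite IHt ?IHu; [|exact: teq_sum_defr tu|exact: teq_sum_defl tu].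
    by apply/gm.2/tsum_class.
move=> y; have [t [tt ->]] := tclassP y.
by have := tlift_class tt; rewrite gE // => -[].
Qed.

End TensorUniversal.

Lemma tens_is_tensor (A B : EA) : is_tensor (@tens A B).
Proof.
split=> [|X h hb]; first exact: tens_bimorph.
exists (tlift h); split; first by split; [exact: tlift_morph | exact: tlift_tens].
by move=> g gm gh y; apply: tlift_unique.
Qed.

Lemma setX0l (T U : finType) (V : {set U}) : setX (set0 : {set T}) V = set0.
Proof. by apply/setP => -[x y]; rewrite !inE. Qed.

Lemma setX0r (T U : finType) (V : {set T}) : setX V (set0 : {set U}) = set0.
Proof. by apply/setP => -[x y]; rewrite !inE andbF. Qed.

Lemma setX11 (T U : finType) (a : T) (b : U) : setX [set a] [set b] = [set (a, b)].
Proof. by apply/setP => -[x y]; rewrite !inE xpair_eqE. Qed.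

Lemma setXUl (T U : finType) (V1 V2 : {set T}) (W : {set U}) :
  setX (V1 :|: V2) W = setX V1 W :|: setX V2 W.
Proof. by apply/setP => -[x y]; rewrite !inE andb_orl. Qed.

Lemma setXUr (T U : finType) (V : {set T}) (W1 W2 : {set U}) :
  setX V (W1 :|: W2) = setX V W1 :|: setX V W2.
Proof. by apply/setP => -[x y]; rewrite !inE andb_orr. Qed.

Lemma setXI0l (T U : finType) (V1 V2 : {set T}) (W : {set U}) :
  V1 :&: V2 == set0 -> setX V1 W :&: setX V2 W == set0.
Proof.
move/setI0P => d; apply/setI0P => -[x y]; rewrite !inE => /andP[x1 _] /andP[x2 _].
exact: d x1 x2.
Qed.

Lemma setXI0r (T U : finType) (V : {set T}) (W1 W2 : {set U}) :
  W1 :&: W2 == set0 -> setX V W1 :&: setX V W2 == set0.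
Proof.
move/setI0P => d; apply/setI0P => -[x y]; rewrite !inE => /andP[_ y1] /andP[_ y2].
exact: d y1 y2.
Qed.

Section BimorphismLegs.
Variables (A B X : EA) (h : A -> B -> X).
Hypothesis hb : bimorph h.

Lemma bimorph0l b : h (ea_zero A) b = ea_zero X.
Proof. by apply: (@ea_sum_eq0 X _ (h (ea_one A) b)); apply/hb.2.1; rewrite ea_comm ea_sum10. Qed.

Lemma bimorph0r a : h a (ea_zero B) = ea_zero X.
Proof. by apply: (@ea_sum_eq0 X _ (h a (ea_one B))); apply/hb.2.2; rewrite ea_comm ea_sum10. Qed.

Variables (oA : RObj A) (oB : RObj B).

Definition bileg_weight (p : 'I_(r_n oA) * 'I_(r_n oB)) : X :=
  h (r_g oA [set p.1]) (r_g oB [set p.2]).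

Lemma wsum_bileg_rect U V : wsum bileg_weight (setX U V) = Some (h (r_g oA U) (r_g oB V)).
Proof.
have gA := r_g_morph oA; have gB := r_g_morph oB.
elim/disjoint_set_ind: U V => [V|k|U1 U2 d IH1 IH2 V].
- by rewrite setX0l wsum0 (ea_morph0 gA) bimorph0l.
- elim/disjoint_set_ind => [|l|V1 V2 d IH1 IH2].
  + by rewrite setX0r wsum0 (ea_morph0 gB) bimorph0r.
  + by rewrite setX11 wsum1.
  + rewrite setXUr; apply/(wsumU _ _ (setXI0r _ d)); exists (h (r_g oA [set k]) (r_g oB V1)).
    by eexists; split; [exact: IH1 | split; [exact: IH2 | apply/hb.2.2/gB.2/bool_sumI]].
rewrite setXUl; apply/(wsumU _ _ (setXI0l _ d)); exists (h (r_g oA U1) (r_g oB V)).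
by eexists; split; [exact: IH1 | split; [exact: IH2 | apply/hb.2.1/gA.2/bool_sumI]].
Qed.

Definition bileg : {set 'I_(r_n oA) * 'I_(r_n oB)} -> X := wmorph bileg_weight.

Lemma bileg_morph : @ea_morph (bool_ea _) X bileg.
Proof.
apply: wmorph_morph.
have -> : [set: 'I_(r_n oA) * 'I_(r_n oB)] = setX setT setT by apply/setP => -[x y]; rewrite !inE.
by rewrite wsum_bileg_rect (r_g_morph oA).1 (r_g_morph oB).1 hb.1.
Qed.

Lemma bileg_rect U V : bileg (setX U V) = h (r_g oA U) (r_g oB V).
Proof. by rewrite /bileg /wmorph wsum_bileg_rect. Qed.

Lemma bileg1 p : bileg [set p] = h (r_g oA [set p.1]) (r_g oB [set p.2]).
Proof. exact: wmorph1. Qed.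

End BimorphismLegs.
Arguments bileg {A B X} h oA oB _.

Lemma ba_morph_set1I (T U : finType) (f : {set T} -> {set U}) a b :
  ba_morph f -> a != b -> f [set a] :&: f [set b] = set0.
Proof.
move=> [f0 _ _ fI _] ab; rewrite -fI -f0; congr f.
by apply/setP => x; rewrite !inE; case: eqP => // ->; rewrite (negbTE ab).
Qed.

Section CoproductMap.
Variables (n n' m m' : nat).
Variables (fA : {set 'I_n} -> {set 'I_n'}) (fB : {set 'I_m} -> {set 'I_m'}).

Lemma coprod_map0 : coprod_map fA fB set0 = set0.
Proof. by rewrite /coprod_map big_set0. Qed.

Lemma coprod_mapU Z1 Z2 :
  coprod_map fA fB (Z1 :|: Z2) = coprod_map fA fB Z1 :|: coprod_map fA fB Z2.
Proof. by rewrite /coprod_map bigcup_setU. Qed.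

Lemma coprod_map1 p : coprod_map fA fB [set p] = setX (fA [set p.1]) (fB [set p.2]).
Proof. by rewrite /coprod_map big_set1. Qed.

Lemma coprod_mapI0 Z1 Z2 : ba_morph fA -> ba_morph fB -> Z1 :&: Z2 == set0 ->
  coprod_map fA fB Z1 :&: coprod_map fA fB Z2 == set0.
Proof.
move=> hA hB /setI0P d; apply/setI0P => -[x y] /bigcupP [p p1] + /bigcupP [q q2].
rewrite !inE => /andP [xp yp] /andP [xq yq].
have pq : p != q by apply: contraTneq q2 => <-; apply/negP/d.
case: (eqVneq p.1 q.1) => e1.
  have e2 : p.2 != q.2 by apply: contraNneq pq => e2; apply/eqP/injective_projections.
  by move: (ba_morph_set1I hB e2) => /setP/(_ y); rewrite !inE yp yq.
by move: (ba_morph_set1I hA e1) => /setP/(_ x); rewrite !inE xp xq.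
Qed.

End CoproductMap.

Lemma bileg_cocone (A B X : EA) (h : A -> B -> X) :
  bimorph h -> is_cocone (fun oA oB => bileg h oA oB).
Proof.
move=> hb; split=> [oA oB|oA oA' oB oB' fA fB [bA gA] [bB gB]]; first exact: bileg_morph.
apply: eq_additive => [||p]; last by rewrite coprod_map1 bileg_rect // bileg1 gA gB.
- have Lm := bileg_morph hb oA' oB'.
  split=> [|Z1 Z2 d]; first by rewrite coprod_map0 (ea_morph0 Lm).
  by rewrite coprod_mapU; apply/Lm.2/bool_sumI/coprod_mapI0.
- exact: ea_morph_additive (bileg_morph hb oA oB).
Qed.

Definition seq_weight (A : EA) (s : seq A) (i : 'I_(size s)) : A := nth (ea_zero A) s i.
Arguments seq_weight {A} s i.

Lemma wsum_seq_weight (A : EA) (s : seq A) : wsum (seq_weight s) setT = seqsum s.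
Proof.
have p : perm_eq (enum [set: 'I_(size s)]) (ord_enum (size s)).
  apply: uniq_perm; [exact: enum_uniq | exact: ord_enum_uniq |].
  by move=> x; rewrite mem_enum inE mem_ord_enum.
rewrite /wsum (seqsum_perm _ p); congr seqsum.
by rewrite -[in RHS](mkseq_nth (ea_zero A) s) /mkseq -val_ord_enum -map_comp.
Qed.

Definition partition_obj (A : EA) (s : seq A) (s1 : seqsum s = Some (ea_one A)) : RObj A :=
  @MkRObj A (size s) (wmorph (seq_weight s)) (wmorph_morph (etrans (wsum_seq_weight s) s1)).

Lemma partition_obj1 (A : EA) (s : seq A) (s1 : seqsum s = Some (ea_one A)) k :
  r_g (partition_obj s1) [set k] = nth (ea_zero A) s k.
Proof. exact: wmorph1. Qed.

Definition preim_map (T U : finType) (psi : U -> T) (Z : {set T}) : {set U} := psi @^-1: Z.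

Lemma preim_map_ba (T U : finType) (psi : U -> T) : ba_morph (preim_map psi).
Proof.
by split=> [||X Y|X Y|X]; rewrite /preim_map ?preimset0 ?preimsetT ?preimsetU ?preimsetI ?preimsetC.
Qed.

Lemma preim_map_arrow (A : EA) (o o' : RObj A) (psi : 'I_(r_n o') -> 'I_(r_n o)) :
  (forall k, r_g o' (preim_map psi [set k]) = r_g o [set k]) -> RArrow o o' (preim_map psi).
Proof.
move=> psiE; split; first exact: preim_map_ba.
have g'm := r_g_morph o'.
have add' : ea_additive (fun Z => r_g o' (preim_map psi Z)).
  split=> [|Z1 Z2 d]; first by rewrite /preim_map preimset0 (ea_morph0 g'm).
  rewrite /preim_map preimsetU; apply/g'm.2/bool_sumI.
  by rewrite -preimsetI (eqP d) preimset0.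
exact: eq_additive add' (ea_morph_additive (r_g_morph o)) psiE.
Qed.

Lemma disjoint_set1 (T : finType) (i j : T) : i != j -> [set i] :&: [set j] == set0.
Proof. by move=> ij; apply/setI0P => x; rewrite !inE => /eqP -> /eqP ji; rewrite ji eqxx in ij. Qed.

Section SplitObjects.
Variable A : EA.

Lemma seqsum_split2 a : seqsum [:: a; ortho a] = Some (ea_one A).
Proof. by rewrite /= ea_sumr0 /= ortho_sum. Qed.

Definition split2 a := partition_obj (seqsum_split2 a).

Lemma seqsum_split3 a1 a2 a : ea_sum A a1 a2 = Some a ->
  seqsum [:: a1; a2; ortho a] = Some (ea_one A).
Proof.
move=> e; have [b [a2b a1b]] := ea_assoc e (ortho_sum a).
by rewrite /= ea_sumr0 /= a2b.
Qed.

Lemma sum_in_partition a1 a2 a : ea_sum A a1 a2 = Some a ->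
  exists (o : RObj A) (S1 S2 : {set 'I_(r_n o)}),
    [/\ S1 :&: S2 == set0, r_g o S1 = a1 & r_g o S2 = a2].
Proof.
move=> e; exists (partition_obj (seqsum_split3 e)), [set ord0], [set @Ordinal 3 1 isT].
by split; [exact: disjoint_set1 | exact: partition_obj1 | exact: partition_obj1].
Qed.

Definition indicator (n : nat) (S : {set 'I_n}) (k : 'I_n) : 'I_2 :=
  if k \in S then ord0 else ord_max.

Lemma preim_indicator0 (n : nat) (S : {set 'I_n}) : preim_map (indicator S) [set ord0] = S.
Proof. by apply/setP => x; rewrite !inE /indicator; case: (x \in S). Qed.

Lemma preim_indicator1 (n : nat) (S : {set 'I_n}) : preim_map (indicator S) [set ord_max] = ~: S.
Proof. by apply/setP => x; rewrite !inE /indicator; case: (x \in S). Qed.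

(* [o] refines the two-block decomposition [r_g o S + r_g o (~: S)] of the unit. *)
Lemma split2_arrow (o : RObj A) S a : r_g o S = a -> RArrow (split2 a) o (preim_map (indicator S)).
Proof.
move=> oS; apply: preim_map_arrow => k; rewrite partition_obj1.
have [->|->] : k = ord0 \/ k = ord_max by case: k => -[|[|//]] ?; [left|right]; apply: val_inj.
  by rewrite preim_indicator0.
by rewrite preim_indicator1 -bool_ortho (ea_morph_ortho (r_g_morph o)) oS.
Qed.

End SplitObjects.

Section CoconeBimorphism.
Variables A B X : EA.
Local Unset Implicit Arguments.
Variable y : legs A B X.
Local Set Implicit Arguments.
Hypothesis hy : is_cocone y.

Definition cocone_bimap (a : A) (b : B) : X := y (split2 a) (split2 b) [set (ord0, ord0)].

Lemma cocone_bimapE (oA : RObj A) (oB : RObj B) S T a b :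
  r_g oA S = a -> r_g oB T = b -> cocone_bimap a b = y oA oB (setX S T).
Proof.
move=> oAS oBT; rewrite /cocone_bimap -(hy.2 _ _ _ _ _ _ (split2_arrow oAS) (split2_arrow oBT)).
by rewrite coprod_map1 /= !preim_indicator0.
Qed.

Lemma cocone_bimap1 : cocone_bimap (ea_one A) (ea_one B) = ea_one X.
Proof.
rewrite (@cocone_bimapE (split2 (ea_one A)) (split2 (ea_one B)) setT setT) ?(r_g_morph _).1 //.
have -> : setX [set: 'I_2] [set: 'I_2] = setT by apply/setP => -[? ?]; rewrite !inE.
exact: (hy.1 _ _).1.
Qed.

Lemma cocone_bimap_addl b a1 a2 a : ea_sum A a1 a2 = Some a ->
  ea_sum X (cocone_bimap a1 b) (cocone_bimap a2 b) = Some (cocone_bimap a b).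
Proof.
move=> e; have [o [S1 [S2 [d oS1 oS2]]]] := sum_in_partition e.
have oS : r_g o (S1 :|: S2) = a by apply: ea_morph_union (r_g_morph o) d _; rewrite oS1 oS2.
have b0 : r_g (split2 b) [set ord0] = b by rewrite partition_obj1.
rewrite (cocone_bimapE oS1 b0) (cocone_bimapE oS2 b0) (cocone_bimapE oS b0) setXUl.
exact/(hy.1 _ _).2/bool_sumI/setXI0l.
Qed.

Lemma cocone_bimap_addr a b1 b2 b : ea_sum B b1 b2 = Some b ->
  ea_sum X (cocone_bimap a b1) (cocone_bimap a b2) = Some (cocone_bimap a b).
Proof.
move=> e; have [o [T1 [T2 [d oT1 oT2]]]] := sum_in_partition e.
have oT : r_g o (T1 :|: T2) = b by apply: ea_morph_union (r_g_morph o) d _; rewrite oT1 oT2.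
have a0 : r_g (split2 a) [set ord0] = a by rewrite partition_obj1.
rewrite (cocone_bimapE a0 oT1) (cocone_bimapE a0 oT2) (cocone_bimapE a0 oT) setXUr.
exact/(hy.1 _ _).2/bool_sumI/setXI0r.
Qed.

Lemma cocone_bimap_bimorph : bimorph cocone_bimap.
Proof.
by split; [exact: cocone_bimap1 | split; [exact: cocone_bimap_addl | exact: cocone_bimap_addr]].
Qed.

End CoconeBimorphism.

Lemma tensor_colimit (A B T : EA) (t : A -> B -> T) :
  is_tensor t -> is_colimit (fun oA oB => bileg t oA oB).
Proof.
move=> [tb tuniv]; split=> [|X x hx]; first exact: bileg_cocone.
have [u [[um ut] uuniq]] := tuniv X _ (cocone_bimap_bimorph hx).
exists u; split.
  split=> // oA oB; apply: eq_additive => [||[i j]].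
  - exact: ea_morph_additive (ea_morph_comp (bileg_morph tb oA oB) um).
  - exact: ea_morph_additive (hx.1 oA oB).
  - by rewrite bileg1 ut -setX11; apply: cocone_bimapE.
move=> v vm vx; apply: uuniq => // a b.
by rewrite /cocone_bimap -vx bileg1 !partition_obj1.
Qed.

Theorem mainTheorem6 :
  forall A B : EA,
    exists (C : EA) (c : legs A B C),
      is_colimit c /\
      exists (T : EA) (t : A -> B -> T), is_tensor t /\ ea_iso T C.
Proof.
move=> A B; exists (Tensor A B), (fun oA oB => bileg (@tens A B) oA oB).
split; first exact/tensor_colimit/tens_is_tensor.
exists (Tensor A B), (@tens A B); split; first exact: tens_is_tensor.
by exists id, id.
Qed.
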